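(* Let $a\in\mathbb{R}$ and $\theta\in(0,\pi)$, with $\theta\neq\cos^{-1}\!\left(-\frac{1}{2\sqrt a}\right)$ whenever $a>1/4$. Let \[ \zeta=\zeta(\theta)=\frac{(2a-1)\cos\theta+\sqrt{(1-4a)\cos^2\theta+a}}{1-4a\cos^2\theta},\qquad z(\theta)=\frac{a\zeta}{(2\cos\theta+\zeta)(1+2\zeta\cos\theta)}. \] Then the zeros in $t$ of $1+t+at^2+z(\theta)t^3$ are \[ t_0=-\frac{e^{2i\theta}+\zeta e^{i\theta}+\zeta e^{3i\theta}}{\zeta e^{3i\theta}},\qquad t_1=t_0e^{2i\theta},\qquad t_2=\zeta e^{i\theta}t_0. \]
   Context: The square root denotes the principal square root (it may be non-real if the radicand is negative); the statement concerns those $\theta$ for which $\zeta(\theta)$ and $z(\theta)$ are defined (nonzero denominators). *)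

From Stdlib Require Import Reals.
From Coquelicot Require Export Coquelicot.
Export Complex.
Open Scope R_scope.

Definition csqrt_real (r : R) : C :=
  if Rle_dec 0 r then RtoC (sqrt r) else (0, sqrt (- r))%R.

Definition cis (x : R) : C := (cos x, sin x).

Definition zeta (a th : R) : C :=
  ((RtoC ((2 * a - 1) * cos th) + csqrt_real ((1 - 4 * a) * (cos th) ^ 2 + a))
   / RtoC (1 - 4 * a * (cos th) ^ 2))%C.

Definition zfun (a th : R) : C :=
  (RtoC a * zeta a th
   / ((RtoC (2 * cos th) + zeta a th) * (1 + RtoC (2 * cos th) * zeta a th)))%C.

Definition t0 (a th : R) : C :=
  (- ((cis th ^ 2 + zeta a th * cis th + zeta a th * cis th ^ 3)
      / (zeta a th * cis th ^ 3)))%C.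
Definition t1 (a th : R) : C := (t0 a th * cis th ^ 2)%C.
Definition t2 (a th : R) : C := (zeta a th * cis th * t0 a th)%C.

From Stdlib Require Import Reals Lra.
From Coquelicot Require Import Coquelicot.

(* With w = e^{i th} and c = w + 1/w = 2 cos th, the formula for zeta is the
   quadratic formula for the equation a (1 + c zeta)^2 = zeta (c + zeta).
   Eliminating a with this relation turns the claimed factorization of
   1 + t + a t^2 + z t^3 into a rational identity in w and zeta. *)

Lemma Cmult_neq_0_inv (x y : C) : (x * y)%C <> 0%C -> x <> 0%C /\ y <> 0%C.
Proof. intros H; split; intros E; apply H; rewrite E; ring. Qed.

Lemma csqrt_real_sqr (r : R) : (csqrt_real r * csqrt_real r)%C = RtoC r.
Proof.
  unfold csqrt_real. destruct (Rle_dec 0 r) as [Hr | Hr].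
  - rewrite <- RtoC_mult, sqrt_sqrt; auto.
  - unfold Cmult, RtoC; simpl.
    rewrite sqrt_sqrt by lra. f_equal; ring.
Qed.

Lemma cis_neq_0 (x : R) : cis x <> 0%C.
Proof.
  intros E. injection E as Ec Es.
  pose proof (sin2_cos2 x) as H. rewrite Ec, Es in H. unfold Rsqr in H. lra.
Qed.

Lemma Cinv_cis (x : R) : (/ cis x)%C = Cconj (cis x).
Proof.
  unfold Cinv, Cconj, cis; cbn [fst snd].
  pose proof (sin2_cos2 x) as H. unfold Rsqr in H.
  replace (cos x ^ 2 + sin x ^ 2) with 1 by lra.
  f_equal; field.
Qed.

Lemma cis_add_Cinv (x : R) : (cis x + / cis x)%C = RtoC (2 * cos x).
Proof.
  rewrite Cinv_cis. unfold cis, Cconj, Cplus, RtoC; simpl. f_equal; ring.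
Qed.

Lemma quadratic_formula_root (a k s ze : C) :
  (1 - 4 * a * k ^ 2)%C <> 0%C ->
  (s * s)%C = ((1 - 4 * a) * k ^ 2 + a)%C ->
  ze = (((2 * a - 1) * k + s) / (1 - 4 * a * k ^ 2))%C ->
  (a * (1 + 2 * k * ze) ^ 2)%C = (ze * (2 * k + ze))%C.
Proof.
  intros HD Hs Hze.
  set (D := (1 - 4 * a * k ^ 2)%C) in *.
  assert (Hlin : (D * ze - (2 * a - 1) * k)%C = s).
  { rewrite Hze. field. exact HD. }
  assert (Hdiff : (D * (a * (1 + 2 * k * ze) ^ 2 - ze * (2 * k + ze)))%C = 0%C).
  { (* completing the square *)
    transitivity ((1 - 4 * a) * k ^ 2 + a - (D * ze - (2 * a - 1) * k) ^ 2)%C.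
    - unfold D. ring.
    - rewrite Hlin, <- Hs. ring. }
  apply Ceq_minus.
  replace (a * (1 + 2 * k * ze) ^ 2 - ze * (2 * k + ze))%C
    with (/ D * (D * (a * (1 + 2 * k * ze) ^ 2 - ze * (2 * k + ze))))%C
    by (field; exact HD).
  rewrite Hdiff. ring.
Qed.

Ltac push_RtoC :=
  repeat (rewrite RtoC_plus || rewrite RtoC_minus || rewrite RtoC_mult
          || rewrite RtoC_pow).

Lemma zeta_root (a th : R) :
  1 - 4 * a * (cos th) ^ 2 <> 0 ->
  (RtoC a * (1 + RtoC (2 * cos th) * zeta a th) ^ 2)%C
  = (zeta a th * (RtoC (2 * cos th) + zeta a th))%C.
Proof.
  intros HD. rewrite RtoC_mult.
  apply quadratic_formula_root with (s := csqrt_real ((1 - 4 * a) * cos th ^ 2 + a)).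
  - intros E. apply HD, RtoC_inj. push_RtoC. exact E.
  - rewrite csqrt_real_sqr. push_RtoC. reflexivity.
  - unfold zeta. push_RtoC. reflexivity.
Qed.

Lemma cubic_factorization (w ze a z t0 t : C) :
  w <> 0%C -> ze <> 0%C ->
  ((w + / w) + ze)%C <> 0%C -> (1 + (w + / w) * ze)%C <> 0%C ->
  (a * (1 + (w + / w) * ze) ^ 2)%C = (ze * ((w + / w) + ze))%C ->
  z = (a * ze / (((w + / w) + ze) * (1 + (w + / w) * ze)))%C ->
  t0 = (- ((w ^ 2 + ze * w + ze * w ^ 3) / (ze * w ^ 3)))%C ->
  (1 + t + a * t ^ 2 + z * t ^ 3)%C
  = (z * (t - t0) * (t - t0 * w ^ 2) * (t - ze * w * t0))%C.
Proof.
  intros Hw Hze Hv Hu Ha -> ->.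
  (* [field] clears [/ w], so it needs the denominators multiplied by [w]. *)
  assert (Hu' : (w + (w * w + 1) * ze)%C <> 0%C).
  { intros E. apply Hu.
    replace (1 + (w + / w) * ze)%C with ((w + (w * w + 1) * ze) / w)%C
      by (field; exact Hw).
    rewrite E. field. exact Hw. }
  assert (Hv' : (w * w + 1 + ze * w)%C <> 0%C).
  { intros E. apply Hv.
    replace ((w + / w) + ze)%C with ((w * w + 1 + ze * w) / w)%C
      by (field; exact Hw).
    rewrite E. field. exact Hw. }
  replace a with (ze * ((w + / w) + ze) / (1 + (w + / w) * ze) ^ 2)%C
    by (rewrite <- Ha; field; split; assumption).
  field. repeat split; assumption.
Qed.

Theorem lemma2p7 (a th : R) :
  0 < th < PI ->
  (1 / 4 < a -> th <> acos (- (1 / (2 * sqrt a)))) ->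
  (* zeta(theta) is defined *)
  1 - 4 * a * (cos th) ^ 2 <> 0 ->
  (* z(theta) is defined *)
  ((RtoC (2 * cos th) + zeta a th) * (1 + RtoC (2 * cos th) * zeta a th))%C <> 0%C ->
  (* t0 is defined *)
  zeta a th <> 0%C ->
  forall t : C,
    (1 + t + RtoC a * t ^ 2 + zfun a th * t ^ 3)%C
    = (zfun a th * (t - t0 a th) * (t - t1 a th) * (t - t2 a th))%C.
Proof.
  (* The range of th and the acos condition only serve the definedness of
     zeta and z, which is assumed explicitly. *)
  intros _ _ HD Hdenom Hze t.
  destruct (Cmult_neq_0_inv _ _ Hdenom) as [Hv Hu].
  rewrite <- cis_add_Cinv in Hv, Hu.
  apply cubic_factorization; try assumption.
  - apply cis_neq_0.
  - rewrite cis_add_Cinv. apply zeta_root. exact HD.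
  - unfold zfun. rewrite cis_add_Cinv. reflexivity.
  - reflexivity.
Qed.
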